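(* Let $F:\mathbb{R}^d\to\mathbb{R}$ be $L$-smooth and $\mu$-strongly convex, $\mathbf{K}\in\mathbb{R}^{p\times d}$ nonzero, $b\in\mathrm{range}(\mathbf{K})$, and let $(x^\star,y^\star)$ be the optimal primal–dual pair described in the context. Let $(x^k,x_g^k,y^k)$ be generated by Algorithm B (described in the context) with parameters $\eta,\theta>0$, $\tau$, and $\alpha$ satisfying $0\leq \alpha \leq \mu$. Then for every $k\ge 0$, $$-\frac{1}{2\eta}\|x^{k+1} - x^k\|^2 \leq -\frac{\eta}{4}\|\mathbf{K}^T y^{k+1} - \mathbf{K}^T y^{\star}\|^2 + \eta\alpha^2\|x^{k+1} - x^{\star}\|^2 + 2\eta L\,\mathrm{D}_{F}(x_g^k, x^{\star}).$$
   Context: $F$ is $L$-smooth ($\nabla F$ is $L$-Lipschitz) and $\mu$-strongly convex ($F-\frac{\mu}{2}\|\cdot\|^2$ convex), $0<\mu\le L$. $\mathrm{D}_F(x,x') \coloneqq F(x) - F(x') -\langle\nabla F(x'),x-x'\rangle$. $x^\star$ is the unique minimizer of $F$ on $\{x:\mathbf{K}x=b\}$, and $y^\star$ is the unique vector in $\mathrm{range}(\mathbf{K})$ with $\nabla F(x^\star)+\mathbf{K}^Ty^\star=0$. Algorithm B (parameters $x^0\in\mathbb{R}^d$, $y^0=0\in\mathbb{R}^p$, $\eta,\theta,\alpha$, $\tau$): set $x_f^0=x^0$. For $k=0,1,\ldots$: $x_g^k = \tau x^k + (1-\tau)x_f^k$; $x^{k+\frac12} = (1+\eta\alpha)^{-1}\big(x^k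 - \eta(\nabla F(x_g^k) - \alpha x_g^k + \mathbf{K}^T y^k)\big)$; $y^{k+1} = y^k + \theta(\mathbf{K}x^{k+\frac12} - b)$; $x^{k+1} = (1+\eta\alpha)^{-1}\big(x^k - \eta(\nabla F(x_g^k) - \alpha x_g^k + \mathbf{K}^T y^{k+1})\big)$; $x_f^{k+1} = x_g^k + \frac{2\tau}{2-\tau}(x^{k+1}-x^k)$. *)

From HB Require Import structures.
From mathcomp Require Import all_boot all_order all_algebra.
From mathcomp Require Import all_classical all_reals all_analysis.
Set Implicit Arguments. Unset Strict Implicit. Unset Printing Implicit Defensive.
Import Order.TTheory GRing.Theory Num.Theory.
Local Open Scope ring_scope.

Definition dotv (R : realType) (n : nat) (u v : 'cV[R]_n) : R := (u^T *m v) 0 0.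
Definition sqnorm (R : realType) (n : nat) (u : 'cV[R]_n) : R := dotv u u.
Definition enorm (R : realType) (n : nat) (u : 'cV[R]_n) : R := Num.sqrt (sqnorm u).

Definition is_gradient (R : realType) (d : nat) (F : 'cV[R]_d -> R) (gradF : 'cV[R]_d -> 'cV[R]_d) :=
  forall x v : 'cV[R]_d,
    is_derive (0 : R) (1 : R) (fun t : R => F (x + t *: v)) (dotv (gradF x) v).

Definition L_smooth (R : realType) (d : nat) (gradF : 'cV[R]_d -> 'cV[R]_d) (L : R) :=
  forall x y, enorm (gradF x - gradF y) <= L * enorm (x - y).

Definition convex_fun (R : realType) (d : nat) (G : 'cV[R]_d -> R) :=
  forall (x y : 'cV[R]_d) (t : R), 0 <= t -> t <= 1 ->
    G (t *: x + (1 - t) *: y) <= t * G x + (1 - t) * G y.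

Definition strongly_convex (R : realType) (d : nat) (F : 'cV[R]_d -> R) (mu : R) :=
  convex_fun (fun x => F x - mu / 2 * sqnorm x).

Definition bregman (R : realType) (d : nat) (F : 'cV[R]_d -> R) (gradF : 'cV[R]_d -> 'cV[R]_d)
  (x x' : 'cV[R]_d) : R := F x - F x' - dotv (gradF x') (x - x').

Section AlgB.
Variables (R : realType) (d p : nat) (gradF : 'cV[R]_d -> 'cV[R]_d)
  (K : 'M[R]_(p, d)) (b : 'cV[R]_p) (eta theta alpha tau : R).

Definition algB_xg (s : 'cV[R]_d * 'cV[R]_d * 'cV[R]_p) : 'cV[R]_d :=
  tau *: s.1.1 + (1 - tau) *: s.1.2.

Definition algB_step (s : 'cV[R]_d * 'cV[R]_d * 'cV[R]_p) : 'cV[R]_d * 'cV[R]_d * 'cV[R]_p :=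
  let x := s.1.1 in
  let y := s.2 in
  let xg := algB_xg s in
  let xh := (1 + eta * alpha)^-1 *: (x - eta *: (gradF xg - alpha *: xg + K^T *m y)) in
  let y' := y + theta *: (K *m xh - b) in
  let x' := (1 + eta * alpha)^-1 *: (x - eta *: (gradF xg - alpha *: xg + K^T *m y')) in
  let xf' := xg + (2 * tau / (2 - tau)) *: (x' - x) in
  (x', xf', y').

Fixpoint algB_state (x0 : 'cV[R]_d) (k : nat) : 'cV[R]_d * 'cV[R]_d * 'cV[R]_p :=
  match k with
  | O => (x0, x0, 0)
  | k'.+1 => algB_step (algB_state x0 k')
  end.

Definition algB_x x0 k := (algB_state x0 k).1.1.
Definition algB_xf x0 k := (algB_state x0 k).1.2.
Definition algB_y x0 k := (algB_state x0 k).2.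
Definition algB_xgk x0 k := algB_xg (algB_state x0 k).
End AlgB.

From HB Require Import structures.
From mathcomp Require Import all_boot all_order all_algebra.
From mathcomp Require Import all_classical all_reals all_analysis.
From mathcomp Require Import ring lra.
Import Order.TTheory GRing.Theory Num.Theory.
Local Open Scope ring_scope.

(* Write a := K^T (y^{k+1} - ystar), r := x^{k+1} - xstar and
   c := gradF(x_g^k) - gradF(xstar) - alpha (x_g^k - xstar).  The x-update is implicit,
   (1 + eta alpha) x^{k+1} = x^k - eta (gradF(x_g^k) - alpha x_g^k + K^T y^{k+1}), so with the
   optimality condition gradF(xstar) + K^T ystar = 0 it reads
   x^{k+1} - x^k = - eta (a + alpha r + c).  Young's inequality yields
   |a|^2 / 4 <= |a + alpha r + c|^2 / 2 + alpha^2 |r|^2 + |c|^2, and the shifted cocoercivity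
   |c|^2 <= 2 L D_F(x_g^k, xstar), valid for 0 <= alpha <= mu, follows by comparing x_g^k
   with the point z = x_g^k - c / L through the three-point identity for Bregman
   divergences, the descent lemma at x_g^k and the strong-convexity bound
   D_F(z, xstar) >= mu/2 |z - xstar|^2. *)

Set Implicit Arguments. Unset Strict Implicit. Unset Printing Implicit Defensive.

Section InnerProduct.
Variables (R : realType) (n : nat).
Implicit Types u v w : 'cV[R]_n.

Lemma dotv_sum u v : dotv u v = \sum_i u i 0 * v i 0.
Proof. by rewrite /dotv !mxE; apply: eq_bigr => i _; rewrite mxE. Qed.

Lemma dotvC u v : dotv u v = dotv v u.
Proof. by rewrite !dotv_sum; apply: eq_bigr => i _; rewrite mulrC. Qed.

Lemma dotvDl u v w : dotv (u + v) w = dotv u w + dotv v w.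
Proof. by rewrite !dotv_sum -big_split; apply: eq_bigr => i _; rewrite mxE mulrDl. Qed.

Lemma dotvZl a u w : dotv (a *: u) w = a * dotv u w.
Proof. by rewrite !dotv_sum mulr_sumr; apply: eq_bigr => i _; rewrite mxE mulrA. Qed.

Lemma dotvNl u w : dotv (- u) w = - dotv u w.
Proof. by rewrite -scaleN1r dotvZl mulN1r. Qed.

Lemma dotvBl u v w : dotv (u - v) w = dotv u w - dotv v w.
Proof. by rewrite dotvDl dotvNl. Qed.

Lemma dotvDr u v w : dotv w (u + v) = dotv w u + dotv w v.
Proof. by rewrite !(dotvC w) dotvDl. Qed.

Lemma dotvZr a u w : dotv w (a *: u) = a * dotv w u.
Proof. by rewrite !(dotvC w) dotvZl. Qed.

Lemma dotvNr u w : dotv w (- u) = - dotv w u.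
Proof. by rewrite !(dotvC w) dotvNl. Qed.

Lemma dotvBr u v w : dotv w (u - v) = dotv w u - dotv w v.
Proof. by rewrite !(dotvC w) dotvBl. Qed.

Definition dotvE := (dotvDl, dotvDr, dotvBl, dotvBr, dotvNl, dotvNr, dotvZl, dotvZr).

Lemma sqnorm_ge0 u : 0 <= sqnorm u.
Proof. by rewrite /sqnorm dotv_sum; apply: sumr_ge0 => i _; apply: sqr_ge0. Qed.

Lemma sqnorm_eq0 u : sqnorm u = 0 -> u = 0.
Proof.
rewrite /sqnorm dotv_sum => /psumr_eq0P u0; apply/matrixP => i j.
rewrite ord1 mxE; apply/eqP; rewrite -[_ == 0]orbb -mulf_eq0 u0 // => k _.
exact: sqr_ge0.
Qed.

Lemma sqnormN u : sqnorm (- u) = sqnorm u.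
Proof. by rewrite /sqnorm dotvNl dotvNr opprK. Qed.

Lemma sqnormZ a u : sqnorm (a *: u) = a ^+ 2 * sqnorm u.
Proof. by rewrite /sqnorm dotvZl dotvZr mulrA expr2. Qed.

Lemma sqnormD u v : sqnorm (u + v) = sqnorm u + 2 * dotv u v + sqnorm v.
Proof. by rewrite /sqnorm !dotvE (dotvC v u); ring. Qed.

Lemma sqnormB u v : sqnorm (u - v) = sqnorm u - 2 * dotv u v + sqnorm v.
Proof. by rewrite /sqnorm !dotvE (dotvC v u); ring. Qed.

Lemma sqnormD_le u v : sqnorm (u + v) <= 2 * sqnorm u + 2 * sqnorm v.
Proof. by have := sqnorm_ge0 (u - v); rewrite sqnormB sqnormD; lra. Qed.

Lemma enorm_ge0 u : 0 <= enorm u.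
Proof. exact: sqrtr_ge0. Qed.

Lemma sqr_enorm u : enorm u ^+ 2 = sqnorm u.
Proof. by rewrite sqr_sqrtr // sqnorm_ge0. Qed.

Lemma enormZ a u : enorm (a *: u) = `|a| * enorm u.
Proof. by rewrite /enorm sqnormZ sqrtrM ?sqr_ge0 // sqrtr_sqr. Qed.

Lemma normr_dotv_le u v : `|dotv u v| <= enorm u * enorm v.
Proof.
have enorm_gt0 w : w != 0 -> 0 < enorm w.
  move=> w0; rewrite lt_def enorm_ge0 andbT; apply: contra w0 => /eqP e0.
  by apply/eqP/sqnorm_eq0; rewrite -sqr_enorm e0 expr0n.
have [->|u0] := eqVneq u 0.
  by rewrite /dotv trmx0 mul0mx mxE normr0 mulr_ge0 // enorm_ge0.
have [->|v0] := eqVneq v 0.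
  by rewrite /dotv mulmx0 mxE normr0 mulr_ge0 // enorm_ge0.
have uv_gt0 : 0 < enorm u * enorm v by rewrite mulr_gt0 // enorm_gt0.
have := sqnorm_ge0 (enorm v *: u - enorm u *: v).
have := sqnorm_ge0 (enorm v *: u + enorm u *: v).
rewrite sqnormD sqnormB !sqnormZ dotvZl dotvZr -(sqr_enorm u) -(sqr_enorm v).
by move=> Hp Hm; rewrite ler_norml; apply/andP; split; rewrite -(ler_pM2l uv_gt0); lra.
Qed.
End InnerProduct.

Lemma ler_of_linear_perturbation (R : realFieldType) (a b C : R) :
  (forall t, 0 < t -> t <= 1 -> a - C * t <= b) -> a <= b.
Proof.
move=> H; rewrite leNgt; apply/negP => ba.
have gt0 : 0 < a - b + `|C| + 1 by rewrite -addrA ltr_wpDr ?subr_gt0 // ltr_pwDr.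
set t := (a - b) / (a - b + `|C| + 1).
have t0 : 0 < t by rewrite divr_gt0 // subr_gt0.
have t1 : t <= 1 by rewrite ler_pdivrMr // mul1r -addrA lerDl ltW // ltr_pwDr.
have Et : t * (a - b + `|C| + 1) = a - b by rewrite divfK // gt_eqF.
have CtC : C * t <= `|C| * t by apply: ler_wpM2r; [exact: ltW | exact: ler_norm].
have := H t t0 t1; nra.
Qed.

Section Smooth.
Variables (R : realType) (d : nat) (F : 'cV[R]_d -> R) (gradF : 'cV[R]_d -> 'cV[R]_d) (L : R).
Hypotheses (F_grad : is_gradient F gradF) (F_smooth : L_smooth gradF L).

Lemma is_derive_line (u v : 'cV[R]_d) (c : R) :
  is_derive c 1 (fun t => F (u + t *: v)) (dotv (gradF (u + c *: v)) v).
Proof.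
have [Fd Fv] := F_grad (u + c *: v) v.
have shiftE : (fun t => F (u + t *: v)) \o shift c = (fun t => F (u + c *: v + t *: v)) \o shift 0.
  by apply: funext => t /=; rewrite addr0 scalerDl addrAC addrA.
have atE : F (u + c *: v) = F (u + c *: v + 0 *: v) by rewrite scale0r addr0.
split; rewrite /derivable /derive shiftE /= atE; [exact: Fd | exact: Fv].
Qed.

Lemma normr_dotv_gradB_le (u v : 'cV[R]_d) (t : R) : 0 <= t ->
  `|dotv (gradF (u + t *: v) - gradF u) v| <= L * t * sqnorm v.
Proof.
move=> t0; apply: le_trans (normr_dotv_le _ _) _.
have := F_smooth (u + t *: v) u; rewrite addrAC subrr add0r enormZ ger0_norm // => Lip.
rewrite -sqr_enorm expr2 mulrA; apply: (ler_wpM2r (enorm_ge0 _)).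
by rewrite -mulrA.
Qed.

Lemma normr_bregman_le (x y : 'cV[R]_d) : `|bregman F gradF x y| <= L / 2 * sqnorm (x - y).
Proof.
have [v ->] : exists v, x = y + v by exists (x - y); rewrite addrC subrK.
have yvK : y + v - y = v by rewrite addrC addKr.
rewrite yvK.
have signed_le e : `|e| <= 1 -> e * bregman F gradF (y + v) y <= L / 2 * sqnorm v.
  move=> e1; set W := sqnorm v; set D0 := dotv (gradF y) v.
  (* The quadratic term makes h nonincreasing on [0, 1]: |e| <= 1 and gradF is L-Lipschitz. *)
  pose h t := e * (F (y + t *: v) - D0 * t) - L / 2 * W * (t * t).
  have dh (t : R) : is_derive t (1 : R) h
      (e * (dotv (gradF (y + t *: v)) v - D0) - L / 2 * W * (t + t)).
    have dD0 : is_derive t 1 (fun s : R => D0 * s) D0.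
      by apply: (is_derive_eq (is_deriveZ D0 (is_derive_id t 1))); exact: mulr1.
    have dsq : is_derive t 1 (fun s : R => s * s) (t + t).
      apply: (is_derive_eq (is_deriveM (is_derive_id t 1) (is_derive_id t 1))).
      by rewrite /GRing.scale /= mulr1.
    exact: is_deriveB (is_deriveZ e (is_deriveB (is_derive_line y v t) dD0))
                      (is_deriveZ (L / 2 * W) dsq).
  have [c /andP[c0 c1] hc] := MVT ltr01 (fun t _ => dh t)
    (derivable_within_continuous (fun t _ => (dh t).(ex_derive))).
  have e_dot_le : e * dotv (gradF (y + c *: v) - gradF y) v <= L * c * W.
    apply: le_trans (ler_norm _) _; rewrite normrM.
    apply: le_trans (normr_dotv_gradB_le y v (ltW c0)).
    by rewrite -[X in _ <= X]mul1r ler_wpM2r.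
  move: hc e_dot_le; rewrite /h /bregman yvK dotvBl -/D0 -/W.
  rewrite scale0r scale1r addr0 !mul0r !mulr0 !subr0 !mulr1.
  nra.
have := signed_le 1; have := signed_le (-1); rewrite normrN normr1 lexx ler_norml.
by move=> /(_ isT) Hn /(_ isT) Hp; apply/andP; split; lra.
Qed.

End Smooth.

Lemma bregman_three_point (R : realType) (d : nat) (F : 'cV[R]_d -> R) (gradF : 'cV[R]_d -> 'cV[R]_d)
    (x y z : 'cV[R]_d) :
  bregman F gradF x y + bregman F gradF z x
  = bregman F gradF z y + dotv (gradF x - gradF y) (x - z).
Proof. by rewrite /bregman !dotvE; ring. Qed.

Section StronglyConvex.
Variables (R : realType) (d : nat) (F : 'cV[R]_d -> R) (gradF : 'cV[R]_d -> 'cV[R]_d) (L mu : R).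
Hypotheses (F_grad : is_gradient F gradF) (F_smooth : L_smooth gradF L)
  (F_sc : strongly_convex F mu).

Lemma sqnorm_le_bregman (x y : 'cV[R]_d) : mu / 2 * sqnorm (x - y) <= bregman F gradF x y.
Proof.
have [w ->] : exists w, x = y + w by exists (x - y); rewrite addrC subrK.
have ywK (v : 'cV[R]_d) : y + v - y = v by rewrite addrC addKr.
(* Convexity of F - mu/2 |.|^2 at y + t w, with the descent lemma at y, gives the claim
   up to an error O(t). *)
rewrite ywK; apply: (@ler_of_linear_perturbation _ _ _ ((L + mu) / 2 * sqnorm w)).
move=> t t0 t1.
have conv := F_sc (y + w) y (ltW t0) t1.
have combE : t *: (y + w) + (1 - t) *: y = y + t *: w.
  by apply/matrixP => i j; rewrite !mxE; ring.
have := normr_bregman_le F_grad F_smooth (y + t *: w) y.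
rewrite ler_norml ywK => /andP[descent _].
move: conv descent; rewrite /bregman combE !ywK !sqnormD !sqnormZ !dotvZr => conv descent.
have : t * (mu / 2 * sqnorm w - (L + mu) / 2 * sqnorm w * t)
       <= t * (F (y + w) - F y - dotv (gradF y) w) by lra.
by rewrite ler_pM2l.
Qed.

Lemma sqnorm_gradB_shift_le_bregman (alpha : R) (x y : 'cV[R]_d) :
  0 < L -> 0 <= alpha -> alpha <= mu ->
  sqnorm (gradF x - gradF y - alpha *: (x - y)) <= 2 * L * bregman F gradF x y.
Proof.
move=> L0 alpha0 alpha_mu.
set r := x - y; set c := gradF x - gradF y - alpha *: r.
have gradB : gradF x - gradF y = c + alpha *: r by rewrite subrK.
pose s : R := L^-1; have Ls : L * s = 1 by rewrite mulfV // gt_eqF.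
have zyE : x - s *: c - y = r - s *: c by rewrite addrAC.
have zxE : x - s *: c - x = - (s *: c) by rewrite addrAC subrr add0r.
have xzE : x - (x - s *: c) = s *: c by rewrite opprB addrC subrK.
set z := x - s *: c in zyE zxE xzE *; clearbody r c s z.
have three : bregman F gradF x y + bregman F gradF z x
    = bregman F gradF z y + (s * sqnorm c + alpha * (s * dotv r c)).
  by rewrite bregman_three_point gradB xzE dotvDl !dotvZr dotvZl mulrCA.
have lower : mu / 2 * (sqnorm r - 2 * (s * dotv r c) + s ^+ 2 * sqnorm c)
    <= bregman F gradF z y.
  by have := sqnorm_le_bregman z y; rewrite zyE sqnormB sqnormZ dotvZr.
have upper : bregman F gradF z x <= s / 2 * sqnorm c.
  have := normr_bregman_le F_grad F_smooth z x.
  rewrite ler_norml zxE sqnormN sqnormZ => /andP[_].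
  suff -> : L / 2 * (s ^+ 2 * sqnorm c) = s / 2 * sqnorm c by [].
  by transitivity (L * s * (s / 2 * sqnorm c)); [ring | rewrite Ls mul1r].
have shift_le : alpha / 2 * (sqnorm r - 2 * (s * dotv r c) + s ^+ 2 * sqnorm c)
    <= mu / 2 * (sqnorm r - 2 * (s * dotv r c) + s ^+ 2 * sqnorm c).
  apply: ler_wpM2r; last lra.
  by rewrite -sqnormZ -dotvZr -sqnormB sqnorm_ge0.
have nonneg_r : 0 <= alpha * sqnorm r by apply: mulr_ge0 (sqnorm_ge0 r).
have nonneg_c : 0 <= alpha * (s ^+ 2 * sqnorm c).
  by apply/mulr_ge0/mulr_ge0 => //; [exact: sqr_ge0 | exact: sqnorm_ge0].
have bregman_ge : s / 2 * sqnorm c <= bregman F gradF x y by lra.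
have L2 : 0 <= 2 * L by lra.
apply: le_trans (ler_wpM2l L2 bregman_ge).
have -> : 2 * L * (s / 2 * sqnorm c) = L * s * sqnorm c by field.
by rewrite Ls mul1r.
Qed.

End StronglyConvex.

Section AlgorithmB.
Variables (R : realType) (d p : nat) (gradF : 'cV[R]_d -> 'cV[R]_d) (K : 'M[R]_(p, d))
  (b : 'cV[R]_p) (eta theta alpha tau : R) (x0 : 'cV[R]_d).

Let x := algB_x gradF K b eta theta alpha tau x0.
Let y := algB_y gradF K b eta theta alpha tau x0.
Let xg := algB_xgk gradF K b eta theta alpha tau x0.

Lemma algB_x_update k :
  1 + eta * alpha != 0 ->
  (1 + eta * alpha) *: x k.+1 = x k - eta *: (gradF (xg k) - alpha *: xg k + K^T *m y k.+1).
Proof. by move=> ea; rewrite [x k.+1]/x /algB_x /= scalerA mulfV // scale1r. Qed.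

Lemma algB_x_increment k (xstar : 'cV[R]_d) (ystar : 'cV[R]_p) :
  1 + eta * alpha != 0 -> gradF xstar + K^T *m ystar = 0 ->
  x k.+1 - x k = - eta *: ((K^T *m y k.+1 - K^T *m ystar) + alpha *: (x k.+1 - xstar)
                           + (gradF (xg k) - gradF xstar - alpha *: (xg k - xstar))).
Proof.
move=> ea opt; have := algB_x_update k ea.
move: opt; set g := gradF (xg k); set a := K^T *m y k.+1.
move: (x k.+1) (x k) (xg k) (gradF xstar) (K^T *m ystar) g a => x1 xk v gs ks g a opt upd.
apply/matrixP => i j; move/matrixP/(_ i j): upd; move/matrixP/(_ i j): opt.
rewrite !mxE => opt upd.
have -> : xk i j = (1 + eta * alpha) * x1 i j + eta * (g i j - alpha * v i j + a i j).
  by rewrite upd; ring.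
have -> : gs i j = - ks i j by apply/eqP; rewrite -addr_eq0 opt.
ring.
Qed.

End AlgorithmB.

Theorem lemma4 (R : realType) (d p : nat) (F : 'cV[R]_d -> R) (gradF : 'cV[R]_d -> 'cV[R]_d)
  (L mu : R) (K : 'M[R]_(p, d)) (b : 'cV[R]_p) (xstar : 'cV[R]_d) (ystar : 'cV[R]_p)
  (x0 : 'cV[R]_d) (eta theta alpha tau : R) :
  0 < mu -> mu <= L ->
  is_gradient F gradF -> L_smooth gradF L -> strongly_convex F mu ->
  K != 0 ->
  (exists z : 'cV[R]_d, b = K *m z) ->
  K *m xstar = b ->
  (forall x : 'cV[R]_d, K *m x = b -> F xstar <= F x) ->
  (exists z : 'cV[R]_d, ystar = K *m z) ->
  gradF xstar + K^T *m ystar = 0 ->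
  0 < eta -> 0 < theta -> 0 <= alpha -> alpha <= mu ->
  forall k : nat,
    let xk := algB_x gradF K b eta theta alpha tau x0 k in
    let xk1 := algB_x gradF K b eta theta alpha tau x0 k.+1 in
    let yk1 := algB_y gradF K b eta theta alpha tau x0 k.+1 in
    let xgk := algB_xgk gradF K b eta theta alpha tau x0 k in
    - (1 / (2 * eta)) * sqnorm (xk1 - xk)
      <= - (eta / 4) * sqnorm (K^T *m yk1 - K^T *m ystar)
         + eta * alpha ^+ 2 * sqnorm (xk1 - xstar)
         + 2 * eta * L * bregman F gradF xgk xstar.
Proof.
move=> mu_gt0 mu_le_L F_grad F_smooth F_sc _ _ _ _ _ opt eta_gt0 _ alpha_ge0 alpha_le_mu k /=.
have L_gt0 : 0 < L by apply: lt_le_trans mu_le_L.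
have eta_alpha : 1 + eta * alpha != 0 by rewrite gt_eqF // ltr_pwDl // mulr_ge0 // ltW.
rewrite (@algB_x_increment R d p gradF K b eta theta alpha tau x0 k xstar ystar) // sqnormZ.
set a := K^T *m _ - _; set r := _ - xstar; set c := gradF _ - _ - _.
have cocoercive := sqnorm_gradB_shift_le_bregman F_grad F_smooth F_sc
  (algB_xgk gradF K b eta theta alpha tau x0 k) xstar L_gt0 alpha_ge0 alpha_le_mu.
have young : sqnorm a <= 2 * sqnorm (a + alpha *: r + c) + 4 * (alpha ^+ 2 * sqnorm r) + 4 * sqnorm c.
  have := sqnormD_le (a + alpha *: r + c) (- (alpha *: r + c)).
  have := sqnormD_le (alpha *: r) c.
  rewrite sqnormN sqnormZ -[a + alpha *: r + c]addrA addrK.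
  lra.
have -> : - (1 / (2 * eta)) * ((- eta) ^+ 2 * sqnorm (a + alpha *: r + c))
          = - (eta / 2) * sqnorm (a + alpha *: r + c) by field; rewrite gt_eqF.
have := ler_wpM2l (ltW eta_gt0) young; have := ler_wpM2l (ltW eta_gt0) cocoercive.
lra.
Qed.
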